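(* Let $m\ge3$ and $n\ge2$. For all $i,j\in[n]$ with $i\ne j$ and all $\alpha>0$, the tensor $\alpha(e^{(i)}-e^{(j)})^m+\alpha e^m$ belongs to $DNN_{m,n}\setminus CP_{m,n}$.
   Context: $e^{(i)}$ is the $i$th standard basis vector of $\mathbb{R}^n$ and $e=(1,\dots,1)^T\in\mathbb{R}^n$; $(u^m)_{i_1\ldots i_m}=u_{i_1}\cdots u_{i_m}$. $(\mathcal{A}x^{m-1})_i=\sum_{i_2,\dots,i_m}a_{ii_2\ldots i_m}x_{i_2}\cdots x_{i_m}$; an H-eigenvalue of $\mathcal{A}\in\mathbb{S}_{m,n}$ is $\lambda\in\mathbb{R}$ with $\mathcal{A}x^{m-1}=\lambda(x_i^{m-1})_i$ for some nonzero $x\in\mathbb{R}^n$. $DNN_{m,n}$ is the set of symmetric tensors with all entries nonnegative and all H-eigenvalues nonnegative. $CP_{m,n}$ is the set of tensors $\sum_{k=1}^r(u^{(k)})^m$ with $u^{(k)}\in\mathbb{R}^n_+$. *)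

(* scalars range over an arbitrary real closed field R
   (elementarily equivalent to the reals). *)
From HB Require Import structures.
From mathcomp Require Import all_boot all_order all_algebra.
Set Implicit Arguments. Unset Strict Implicit. Unset Printing Implicit Defensive.
Import Order.TTheory GRing.Theory Num.Theory.
Local Open Scope ring_scope.

(* A real tensor of order m and dimension n is represented as a function on
   index sequences; only sequences of length m are meaningful.
   A [:: i1; ...; im] stands for a_{i1 ... im}. *)
Definition tensor (R : rcfType) (n : nat) := seq 'I_n -> R.

Definition tpow (R : rcfType) (n : nat) (u : 'I_n -> R) : tensor R n :=
  fun s => \prod_(k <- s) u k.

Definition ebasis (R : rcfType) (n : nat) (i : 'I_n) : 'I_n -> R :=
  fun k => if k == i then 1 else 0.
Definition eones (R : rcfType) (n : nat) : 'I_n -> R := fun _ => 1.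

Definition symmetric_tensor (R : rcfType) (m n : nat) (A : tensor R n) : Prop :=
  forall s t : seq 'I_n, size s = m -> perm_eq s t -> A s = A t.

Definition tapply (R : rcfType) (m n : nat) (A : tensor R n) (x : 'I_n -> R)
  (i : 'I_n) : R :=
  \sum_(t : (m.-1).-tuple 'I_n) A (i :: t) * \prod_(k <- t) x k.

Definition H_eigenvalue (R : rcfType) (m n : nat) (A : tensor R n) (l : R) : Prop :=
  exists x : 'I_n -> R, (exists i, x i != 0) /\
    forall i, tapply m A x i = l * x i ^+ m.-1.

Definition DNN (R : rcfType) (m n : nat) (A : tensor R n) : Prop :=
  [/\ symmetric_tensor m A,
      (forall s : seq 'I_n, size s = m -> 0 <= A s) &
      (forall l : R, H_eigenvalue m A l -> 0 <= l)].

Definition CP (R : rcfType) (m n : nat) (A : tensor R n) : Prop :=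
  exists (r : nat) (u : 'I_r -> 'I_n -> R),
    (forall k i, 0 <= u k i) /\
    forall s : seq 'I_n, size s = m -> A s = \sum_(k < r) tpow (u k) s.

From HB Require Import structures.
From mathcomp Require Import all_boot all_order all_algebra.
From mathcomp Require Import ring lra zify.
Set Implicit Arguments. Unset Strict Implicit. Unset Printing Implicit Defensive.
Import Order.TTheory GRing.Theory Num.Theory.
Local Open Scope ring_scope.

(* The tensor is T = alpha u^m + alpha e^m with u = e^(i) - e^(j), a sum of two
   rank-one tensors. For such a sum, (T x^{m-1})_k = alpha u_k (u.x)^{m-1} +
   alpha (e.x)^{m-1}. If m is even, pairing with x gives
   lambda sum_k x_k^m = alpha (u.x)^m + alpha (e.x)^m >= 0. If m is odd, the
   row k = i has nonnegative left-hand side, so lambda < 0 would force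
   T x^{m-1} = 0 and hence lambda = 0. Entries are nonnegative because
   |u_k| <= 1. Finally T_{j i...i} = 0 but T_{j j i...i} = 2 alpha: in a sum of
   nonnegative rank-one tensors, w_j w_i^{m-1} = 0 forces w_j^2 w_i^{m-2} = 0. *)

Lemma sum_tuple_prod (R : comNzRingType) n (f : 'I_n -> R) p :
  \sum_(t : p.-tuple 'I_n) \prod_(k <- t) f k = (\sum_k f k) ^+ p.
Proof.
elim: p => [|p IH].
  rewrite (big_pred1 [tuple]); first by rewrite big_nil expr0.
  by move=> t; rewrite /pred1 /=; case: eqP => // -[]; exact: tuple0.
pose h (q : 'I_n * p.-tuple 'I_n) : p.+1.-tuple 'I_n := [tuple of q.1 :: q.2].
rewrite (reindex h) /=; last first.
  exists (fun t : p.+1.-tuple 'I_n => (thead t, behead_tuple t)) => [[a t] _|t _].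
    by congr pair; apply: val_inj.
  by rewrite /h /=; apply: val_inj; rewrite /= [in RHS](tuple_eta t).
rewrite -(pair_big xpredT xpredT (fun a t => \prod_(k <- h (a, t)) f k)) /=.
rewrite exprS big_distrl /=; apply: eq_bigr => a _.
by rewrite -IH big_distrr /=; apply: eq_bigr => t _; rewrite big_cons.
Qed.

Section RankOneTensors.

Variables (R : rcfType) (n : nat).
Implicit Types (u v x : 'I_n -> R) (s t : seq 'I_n).

Lemma tpow_cons u k s : tpow u (k :: s) = u k * tpow u s.
Proof. exact: big_cons. Qed.

Lemma tpow_nseq u c k : tpow u (nseq c k) = u k ^+ c.
Proof.
elim: c => [|c IH]; first by rewrite /tpow big_nil.
by rewrite -[nseq c.+1 k]/(k :: nseq c k) tpow_cons IH exprS.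
Qed.

Lemma tpow_eones s : tpow (@eones R n) s = 1.
Proof. exact: big1. Qed.

Lemma tpow_perm u s t : perm_eq s t -> tpow u s = tpow u t.
Proof. exact: perm_big. Qed.

Lemma tpow_ge_m1 u s : (forall k, `|u k| <= 1) -> -1 <= tpow u s.
Proof.
move=> u_le1; suff : `|tpow u s| <= 1 by rewrite ler_norml => /andP[].
elim: s => [|k s IH]; first by rewrite /tpow big_nil normr1.
by rewrite tpow_cons normrM mulr_ile1.
Qed.

Lemma tapply_tpow m u x k :
  tapply m (tpow u) x k = u k * (\sum_l u l * x l) ^+ m.-1.
Proof.
rewrite /tapply -sum_tuple_prod mulr_sumr; apply: eq_bigr => t _.
by rewrite /tpow big_cons big_split mulrA.
Qed.

Lemma tapply_add_scale m a b u v x k :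
  tapply m (fun s => a * tpow u s + b * tpow v s) x k =
  a * tapply m (tpow u) x k + b * tapply m (tpow v) x k.
Proof.
rewrite /tapply !mulr_sumr -big_split; apply: eq_bigr => t _ /=; ring.
Qed.

End RankOneTensors.

Section TwoTermSpectrum.

Variables (R : rcfType) (n m : nat) (a b : R) (u v : 'I_n -> R).
Hypotheses (a_gt0 : 0 < a) (b_gt0 : 0 < b).

Let A : tensor R n := fun s => a * tpow u s + b * tpow v s.

Lemma tapply_two_term x k :
  tapply m A x k =
  a * u k * (\sum_l u l * x l) ^+ m.-1 + b * v k * (\sum_l v l * x l) ^+ m.-1.
Proof. by rewrite tapply_add_scale !tapply_tpow !mulrA. Qed.

Lemma H_eigenvalue_two_term_even l :
  ~~ odd m -> (0 < m)%N -> H_eigenvalue m A l -> 0 <= l.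
Proof.
move=> m_even m_gt0 [x [[i0 xi0_neq0] eig]].
have m_eq : m = m.-1.+1 by lia.
set du := \sum_l u l * x l; set dv := \sum_l v l * x l.
have pairing : l * \sum_k x k ^+ m = a * du ^+ m + b * dv ^+ m.
  rewrite mulr_sumr.
  transitivity (\sum_k x k * tapply m A x k).
    by apply: eq_bigr => k _; rewrite eig {1}m_eq exprS; ring.
  transitivity (\sum_k (a * du ^+ m.-1 * (u k * x k) + b * dv ^+ m.-1 * (v k * x k))).
    by apply: eq_bigr => k _; rewrite tapply_two_term; ring.
  by rewrite big_split -!mulr_sumr /= -/du -/dv {3 4}m_eq !exprS; ring.
have sum_pos : 0 < \sum_k x k ^+ m.
  rewrite (bigD1 i0) //= ltr_pwDl ?exprn_even_gt0 ?xi0_neq0 ?orbT //.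
  by apply: sumr_ge0 => k _; exact: exprn_even_ge0.
rewrite -(pmulr_lge0 _ sum_pos) pairing.
by rewrite addr_ge0 // mulr_ge0 ?exprn_even_ge0 // ltW.
Qed.

Lemma H_eigenvalue_two_term_odd i l :
  0 < u i -> 0 < v i -> odd m -> H_eigenvalue m A l -> 0 <= l.
Proof.
move=> ui_gt0 vi_gt0 m_odd [x [[i0 xi0_neq0] eig]].
have m1_even : ~~ odd m.-1 by case: m m_odd => //= m' ->.
rewrite leNgt; apply/negP => l_lt0.
set du := \sum_l u l * x l; set dv := \sum_l v l * x l.
have row_i := eig i; rewrite tapply_two_term -/du -/dv in row_i.
have Pu : 0 <= a * u i * du ^+ m.-1 by rewrite mulr_ge0 ?exprn_even_ge0 ?mulr_ge0 ?ltW.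
have Pv : 0 <= b * v i * dv ^+ m.-1 by rewrite mulr_ge0 ?exprn_even_ge0 ?mulr_ge0 ?ltW.
have Pl : l * x i ^+ m.-1 <= 0 by rewrite nmulr_rle0 ?exprn_even_ge0.
have du_eq0 : du ^+ m.-1 = 0.
  have /eqP : a * u i * du ^+ m.-1 = 0 by lra.
  by rewrite !mulf_eq0 (gt_eqF a_gt0) (gt_eqF ui_gt0) => /eqP.
have dv_eq0 : dv ^+ m.-1 = 0.
  have /eqP : b * v i * dv ^+ m.-1 = 0 by lra.
  by rewrite !mulf_eq0 (gt_eqF b_gt0) (gt_eqF vi_gt0) => /eqP.
have := eig i0; rewrite tapply_two_term -/du -/dv du_eq0 dv_eq0 !mulr0 addr0.
move/esym/eqP; rewrite mulf_eq0 expf_eq0 (negbTE xi0_neq0) andbF orbF.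
by move/eqP => l_eq0; rewrite l_eq0 ltxx in l_lt0.
Qed.

End TwoTermSpectrum.

Lemma CP_entry_eq0 (R : rcfType) m n (A : tensor R n) (i j : 'I_n) :
  (2 < m)%N -> CP m A -> A (j :: nseq m.-1 i) = 0 -> A (j :: j :: nseq m.-2 i) = 0.
Proof.
move=> m_gt2 [r [w [w_ge0 A_sum]]].
have size1 : size (j :: nseq m.-1 i) = m by rewrite /= size_nseq; lia.
have size2 : size (j :: j :: nseq m.-2 i) = m by rewrite /= !size_nseq; lia.
rewrite (A_sum _ size1) (A_sum _ size2) => sum_eq0.
have term_ge0 k : true -> 0 <= tpow (w k) (j :: nseq m.-1 i).
  by rewrite tpow_cons tpow_nseq mulr_ge0 ?exprn_ge0.
apply: big1 => k _; move: (psumr_eq0P term_ge0 sum_eq0 (i := k) isT).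
rewrite !tpow_cons !tpow_nseq.
move/eqP; rewrite mulf_eq0 expf_eq0 => /orP[/eqP-> | /andP[_ /eqP->]].
  by rewrite !mul0r.
by rewrite expr0n gtn_eqF ?mulr0 //; lia.
Qed.

Theorem mainTheorem16 (R : rcfType) (m n : nat) (hm : (3 <= m)%N) (hn : (2 <= n)%N)
  (i j : 'I_n) (hij : i != j) (alpha : R) (halpha : 0 < alpha) :
  let T : tensor R n := fun s =>
    alpha * tpow (fun k => @ebasis R n i k - @ebasis R n j k) s
    + alpha * tpow (@eones R n) s in
  DNN m T /\ ~ CP m T.
Proof.
move=> T; pose u k := @ebasis R n i k - @ebasis R n j k.
have ui : u i = 1 by rewrite /u /ebasis eqxx (negbTE hij) subr0.
have uj : u j = -1 by rewrite /u /ebasis eqxx eq_sym (negbTE hij) sub0r.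
have u_le1 k : `|u k| <= 1.
  rewrite /u /ebasis; case: (k == i); case: (k == j);
  by rewrite ?subrr ?subr0 ?sub0r ?normrN ?normr1 ?normr0.
have TE s : T s = alpha * (tpow u s + 1) by rewrite /T tpow_eones; ring.
split; first split.
- by move=> s t _ st; rewrite !TE (tpow_perm _ st).
- move=> s _; have := tpow_ge_m1 s u_le1.
  by rewrite TE => ge_m1; apply: mulr_ge0; [exact: ltW | lra].
- move=> l; case: (boolP (odd m)) => [m_odd | m_even].
    apply: (H_eigenvalue_two_term_odd (u := u) (v := @eones R n) halpha halpha (i := i)) => //.
    by rewrite ui ltr01.
  by apply: H_eigenvalue_two_term_even => //; lia.
move/(CP_entry_eq0 (i := i) (j := j) hm); rewrite !TE !tpow_cons !tpow_nseq.
by rewrite uj ui !expr1n mulN1r addNr mulr0 => /(_ erefl); lra.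
Qed.
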